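(* Let $(b,c)$ be a weighted graph over $V$ with $n(x)>0$ for all $x\in V$, let $m$ be a measure on $V$, and let $U\subseteq V$ be nonempty. Then for all $u\in D(Q_U)$ $$d_U\Big(1-\sqrt{1-\alpha_{b,c,n}(U)^2}\Big)\|u\|_m^2\le Q_U(u)\le D_U\Big(1+\sqrt{1-\alpha_{b,c,n}(U)^2}\Big)\|u\|_m^2 .$$ If moreover $D_U<\infty$, then for all $u\in D(Q_U)$ $$\Big(D_U-\sqrt{D_U^2-\alpha_{b,c,m}(U)^2}\Big)\|u\|_m^2\le Q_U(u)\le\Big(D_U+\sqrt{D_U^2-\alpha_{b,c,m}(U)^2}\Big)\|u\|_m^2 .$$
   Context: Let $V$ be a countably infinite set. A weighted graph over $V$ is a pair $(b,c)$ of maps $b:V\times V\to[0,\infty)$ and $c:V\to[0,\infty)$ with $b(x,x)=0$, $b(x,y)=b(y,x)$ and $\sum_{y\in V}b(x,y)<\infty$ for all $x,y\in V$. A measure on $V$ is a map $m:V\to(0,\infty)$, and $\|u\|_m^2=\sum_x m(x)u(x)^2$. Define $Q^{\max}(u)=\frac12\sum_{x,y}b(x,y)(u(x)-u(y))^2+\sum_x c(x)u(x)^2$; $Q=Q_{b,c,m}$ is the closure in $\ell^2(V,m)$ of the restriction of $Q^{\max}$ to finitely supported functions. For $U\subseteq V$, $Q_U$ is the closure of the restriction of $Q$ to finitely supported functions with support in $U$ (a form on $\ell^2(U,m)$), and $L_U$ its associated selfadjoint operator. Let $n(x)=\sum_y b(x,y)+c(x)$ (when $n>0$ it is itself a measure),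 $d(x)=n(x)/m(x)$, $d_U=\inf_{x\in U}d(x)$, $D_U=\sup_{x\in U}d(x)$. For finite $W$ let $|\partial W|=\sum_{x\in W,y\notin W}b(x,y)+\sum_{x\in W}c(x)$, and for a measure $\mu$ on $V$ set $\alpha_{b,c,\mu}(U)=\inf\{|\partial W|/\mu(W):\ W\subseteq U\text{ finite, nonempty}\}$, $\mu(W)=\sum_{x\in W}\mu(x)$. *)

From Stdlib Require Import Reals List Classical ClassicalDescription.
Import ListNotations.
Open Scope R_scope.

Definition fin_sum {T : Type} (f : T -> R) (l : list T) : R :=
  fold_right (fun x acc => f x + acc) 0 l.

(* Sum of a NONNEGATIVE family over an arbitrary (countable) index type:
   [has_sum f s] means the (unordered) series sum_x f x converges to s,
   i.e. s is the supremum of all finite partial sums. *)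
Definition has_sum {T : Type} (f : T -> R) (s : R) : Prop :=
  is_lub (fun r => exists l : list T, NoDup l /\ r = fin_sum f l) s.

Definition is_inf (E : R -> Prop) (a : R) : Prop :=
  (forall r, E r -> a <= r) /\ (forall l, (forall r, E r -> l <= r) -> l <= a).
Definition is_sup (E : R -> Prop) (a : R) : Prop := is_lub E a.

Definition indic (P : Prop) : R :=
  if excluded_middle_informative P then 1 else 0.

Definition norm2 {V : Type} (m : V -> R) (u : V -> R) (r : R) : Prop :=
  has_sum (fun x => m x * u x ^ 2) r.

Definition Qmax {V : Type} (b : V -> V -> R) (c : V -> R) (u : V -> R) (q : R)
  : Prop :=
  exists s1 s2,
    has_sum (fun p : V * V => b (fst p) (snd p) * (u (fst p) - u (snd p)) ^ 2) s1 /\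
    has_sum (fun x => c x * u x ^ 2) s2 /\
    q = / 2 * s1 + s2.

Definition fin_supp_in {V : Type} (U : V -> Prop) (u : V -> R) : Prop :=
  exists l : list V, forall x, u x <> 0 -> In x l /\ U x.

(* Graph of the closed form Q_U: u \in D(Q_U) and Q_U(u) = q.  Q_U is the
   closure in l^2(V,m) of Q restricted to finitely supported functions with
   support in U (on which Q coincides with Q^max): u is the l^2-limit of a
   Q-Cauchy sequence phi_k of such functions and q = lim Q(phi_k). *)
Definition QU_graph {V : Type} (b : V -> V -> R) (c : V -> R) (m : V -> R)
  (U : V -> Prop) (u : V -> R) (q : R) : Prop :=
  exists phi : nat -> V -> R,
    (forall k, fin_supp_in U (phi k)) /\
    (exists r : nat -> R,
        (forall k, norm2 m (fun x => phi k x - u x) (r k)) /\ Un_cv r 0) /\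
    (forall eps, eps > 0 -> exists N, forall j k, (j >= N)%nat -> (k >= N)%nat ->
        forall qjk, Qmax b c (fun x => phi j x - phi k x) qjk -> qjk < eps) /\
    (exists qs : nat -> R, (forall k, Qmax b c (phi k) (qs k)) /\ Un_cv qs q).

Definition bdry {V : Type} (b : V -> V -> R) (c : V -> R) (W : list V) (s : R)
  : Prop :=
  exists s1,
    has_sum (fun p : V * V => indic (In (fst p) W /\ ~ In (snd p) W) * b (fst p) (snd p)) s1 /\
    s = s1 + fin_sum c W.

Definition is_alpha {V : Type} (b : V -> V -> R) (c : V -> R) (mu : V -> R)
  (U : V -> Prop) (a : R) : Prop :=
  is_inf (fun r => exists W : list V, W <> [] /\ NoDup W /\
             (forall x, In x W -> U x) /\
             exists s, bdry b c W s /\ r = s / fin_sum mu W) a.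

(* For a finitely supported [phi], peeling off the level sets of [phi^2] one at a
   time (a discrete co-area formula) and the definition of [alpha] give
   [alpha |phi|_mu^2 <= 1/2 sum b |phi x^2 - phi y^2| + sum c phi^2].  Writing
   [|phi x^2 - phi y^2| = |phi x - phi y| |phi x + phi y|] and applying weighted
   AM-GM turns this into [(alpha |phi|_mu^2)^2 <= Q (2 N - Q)], where [Q] is the
   energy of [phi] and [N = |phi|_n^2].  For [mu = n] this reads
   [|Q - N| <= sqrt (1 - alpha^2) N]; for [mu = m], using [N <= D_U |phi|_m^2], it reads
   [|Q - D_U |phi|_m^2| <= sqrt (D_U^2 - alpha^2) |phi|_m^2].  Together with
   [d_U |phi|_m^2 <= N <= D_U |phi|_m^2] these are the bounds for finitely supported
   functions, and they pass to the closure because the norms and the energies of an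
   approximating sequence converge. *)

From Stdlib Require Import Reals List Lra Lia Wf_nat FinFun.
From Stdlib Require Import Classical ClassicalEpsilon ClassicalDescription FunctionalExtensionality.
Import ListNotations.
Open Scope R_scope.

Section FinSum.
Context {T : Type}.
Implicit Types (f g : T -> R) (l L : list T).

Lemma fin_sum_app f l1 l2 : fin_sum f (l1 ++ l2) = fin_sum f l1 + fin_sum f l2.
Proof. induction l1; simpl; [ring | rewrite IHl1; ring]. Qed.

Lemma fin_sum_add f g l : fin_sum (fun x => f x + g x) l = fin_sum f l + fin_sum g l.
Proof. induction l; simpl; [ring | rewrite IHl; ring]. Qed.

Lemma fin_sum_scal f k l : fin_sum (fun x => k * f x) l = k * fin_sum f l.
Proof. induction l; simpl; [ring | rewrite IHl; ring]. Qed.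

Lemma fin_sum_le f g l : (forall x, In x l -> f x <= g x) -> fin_sum f l <= fin_sum g l.
Proof.
  induction l as [|a l IH]; simpl; intros H; [lra|].
  pose proof (H a (or_introl eq_refl)).
  assert (fin_sum f l <= fin_sum g l) by (apply IH; auto). lra.
Qed.

Lemma fin_sum_ext f g l : (forall x, In x l -> f x = g x) -> fin_sum f l = fin_sum g l.
Proof. intros H. apply Rle_antisym; apply fin_sum_le; intros x Hx; rewrite H; auto; lra. Qed.

Lemma fin_sum_zero l : fin_sum (fun _ => 0) l = 0.
Proof. induction l; simpl; [reflexivity | rewrite IHl; ring]. Qed.

Lemma fin_sum_nonneg f l : (forall x, In x l -> 0 <= f x) -> 0 <= fin_sum f l.
Proof. intros H. rewrite <- (fin_sum_zero l). apply fin_sum_le; auto. Qed.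

Lemma fin_sum_pos f l : l <> [] -> (forall x, 0 < f x) -> 0 < fin_sum f l.
Proof.
  intros Hl Hf. destruct l as [|a l]; [congruence|]. simpl.
  assert (0 <= fin_sum f l) by (apply fin_sum_nonneg; intros; left; auto).
  specialize (Hf a). lra.
Qed.

Lemma fin_sum_filter f (p : T -> bool) l :
  fin_sum f l = fin_sum f (filter p l) + fin_sum f (filter (fun x => negb (p x)) l).
Proof. induction l; simpl; [ring|]. destruct (p a); simpl; rewrite IHl; ring. Qed.

Lemma fin_sum_le_of_support f L l :
  NoDup L -> (forall x, 0 <= f x) -> (forall x, In x L -> f x <> 0 -> In x l) ->
  fin_sum f L <= fin_sum f l.
Proof.
  intros HL Hf; revert l; induction HL as [|a L Ha HL IH]; intros l Hs; simpl.
  - apply fin_sum_nonneg; auto.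
  - destruct (Req_dec (f a) 0) as [E|E].
    + rewrite E. assert (fin_sum f L <= fin_sum f l); [|lra].
      apply IH. intros; apply Hs; simpl; auto.
    + destruct (in_split a l (Hs a (or_introl eq_refl) E)) as [l1 [l2 ->]].
      rewrite fin_sum_app; simpl.
      assert (fin_sum f L <= fin_sum f (l1 ++ l2)); [|rewrite fin_sum_app in H; lra].
      apply IH. intros x Hx Hfx.
      destruct (in_app_or _ _ _ (Hs x (or_intror Hx) Hfx)) as [?|[<-|?]];
        [apply in_or_app; auto | contradiction | apply in_or_app; auto].
Qed.

End FinSum.

Section HasSum.
Context {T : Type}.
Implicit Types (f g : T -> R) (L : list T).

Lemma has_sum_ub f s L : has_sum f s -> NoDup L -> fin_sum f L <= s.
Proof. intros [H _] HL. apply H. eauto. Qed.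

Lemma has_sum_nonneg f s : has_sum f s -> 0 <= s.
Proof. intros H. apply (has_sum_ub f s []) in H; [simpl in H; lra | constructor]. Qed.

Lemma has_sum_le_bound f s M :
  has_sum f s -> (forall L, NoDup L -> fin_sum f L <= M) -> s <= M.
Proof. intros [_ H] HM. apply H. intros r [L [HL ->]]. auto. Qed.

Lemma has_sum_approx f s eps :
  has_sum f s -> 0 < eps -> exists L, NoDup L /\ s - eps < fin_sum f L.
Proof.
  intros H He. apply NNPP; intro Hn.
  assert (s <= s - eps); [|lra].
  apply (has_sum_le_bound f); auto.
  intros L HL. apply Rnot_lt_le. intro. apply Hn; eauto.
Qed.

Lemma has_sum_unique f s t : has_sum f s -> has_sum f t -> s = t.
Proof.
  intros Hs Ht. apply Rle_antisym.
  - apply (has_sum_le_bound f s); auto. intros; eapply has_sum_ub; eauto.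
  - apply (has_sum_le_bound f t); auto. intros; eapply has_sum_ub; eauto.
Qed.

Lemma has_sum_of_bound f B :
  (forall L, NoDup L -> fin_sum f L <= B) -> exists s, has_sum f s.
Proof.
  intros HB.
  destruct (completeness (fun r => exists L : list T, NoDup L /\ r = fin_sum f L)) as [s Hs].
  - exists B. intros r [L [HL ->]]. auto.
  - exists 0, []. split; [constructor | reflexivity].
  - exists s; exact Hs.
Qed.

Lemma has_sum_fin_supp f l :
  NoDup l -> (forall x, 0 <= f x) -> (forall x, f x <> 0 -> In x l) ->
  has_sum f (fin_sum f l).
Proof.
  intros Hl Hf Hs. split.
  - intros r [L [HL ->]]. apply fin_sum_le_of_support; auto.
  - intros b Hb. apply Hb. eauto.
Qed.

Lemma has_sum_ext f g s : (forall x, f x = g x) -> has_sum f s -> has_sum g s.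
Proof. intros H. replace g with f; auto. apply functional_extensionality; auto. Qed.

Lemma has_sum_le f g s t : (forall x, f x <= g x) -> has_sum f s -> has_sum g t -> s <= t.
Proof.
  intros H Hs Ht. apply (has_sum_le_bound f); auto. intros L HL.
  apply Rle_trans with (fin_sum g L); [apply fin_sum_le; auto | eapply has_sum_ub; eauto].
Qed.

Lemma has_sum_dominated f g t :
  (forall x, f x <= g x) -> has_sum g t -> exists s, has_sum f s.
Proof.
  intros H Ht. apply (has_sum_of_bound f t). intros L HL.
  apply Rle_trans with (fin_sum g L); [apply fin_sum_le; auto | eapply has_sum_ub; eauto].
Qed.

Lemma has_sum_add f g a b : (forall x, 0 <= f x) -> (forall x, 0 <= g x) ->
  has_sum f a -> has_sum g b -> has_sum (fun x => f x + g x) (a + b).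
Proof.
  intros Hf Hg Ha Hb. split.
  - intros r [L [HL ->]]. rewrite fin_sum_add.
    pose proof (has_sum_ub f a L Ha HL); pose proof (has_sum_ub g b L Hb HL). lra.
  - intros M HM. apply Rnot_lt_le; intro Hlt.
    set (eps := (a + b - M) / 3).
    assert (Heps : 0 < eps) by (unfold eps; lra).
    destruct (has_sum_approx f a eps Ha Heps) as [L1 [HL1 H1]].
    destruct (has_sum_approx g b eps Hb Heps) as [L2 [HL2 H2]].
    set (L := nodup (fun x y => excluded_middle_informative (x = y)) (L1 ++ L2)).
    assert (HL : NoDup L) by apply NoDup_nodup.
    assert (fin_sum f L1 <= fin_sum f L).
    { apply fin_sum_le_of_support; auto. intros x Hx _. apply nodup_In, in_or_app; auto. }
    assert (fin_sum g L2 <= fin_sum g L).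
    { apply fin_sum_le_of_support; auto. intros x Hx _. apply nodup_In, in_or_app; auto. }
    assert (HM' : fin_sum (fun x => f x + g x) L <= M) by (apply HM; eauto).
    rewrite fin_sum_add in HM'. unfold eps in *. lra.
Qed.

Lemma has_sum_scal f k s : 0 < k -> has_sum f s -> has_sum (fun x => k * f x) (k * s).
Proof.
  intros Hk Hs. split.
  - intros r [L [HL ->]]. rewrite fin_sum_scal.
    apply Rmult_le_compat_l; [lra | eapply has_sum_ub; eauto].
  - intros M HM. assert (s <= M / k).
    { apply (has_sum_le_bound f); auto. intros L HL.
      assert (k * fin_sum f L <= M) by (rewrite <- fin_sum_scal; apply HM; eauto).
      apply (Rmult_le_reg_l k); [lra|]. field_simplify; lra. }
    apply (Rmult_le_compat_l k) in H; [|lra]. field_simplify in H; lra.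
Qed.

Lemma has_sum_lincomb f g a b k1 k2 : 0 < k1 -> 0 < k2 ->
  (forall x, 0 <= f x) -> (forall x, 0 <= g x) -> has_sum f a -> has_sum g b ->
  has_sum (fun x => k1 * f x + k2 * g x) (k1 * a + k2 * b).
Proof.
  intros H1 H2 Hf Hg Ha Hb.
  apply has_sum_add; try (apply has_sum_scal; auto); intros x;
    [specialize (Hf x) | specialize (Hg x)]; nra.
Qed.

End HasSum.

Definition pair_swap {A B : Type} (p : A * B) : B * A := (snd p, fst p).

Lemma pair_swap_injective {A B : Type} : Injective (@pair_swap A B).
Proof. intros [x y] [x' y'] H. inversion H; auto. Qed.

Lemma has_sum_swap {A B : Type} (f : A * B -> R) s :
  has_sum f s -> has_sum (fun p => f (snd p, fst p)) s.
Proof.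
  assert (Hmap : forall L, fin_sum (fun p => f (snd p, fst p)) L = fin_sum f (map pair_swap L)).
  { induction L; simpl; auto. rewrite IHL. reflexivity. }
  intros Hs. split.
  - intros r [L [HL ->]]. rewrite Hmap.
    apply has_sum_ub; auto. apply Injective_map_NoDup; auto using pair_swap_injective.
  - intros M HM. apply (has_sum_le_bound f); auto. intros L HL.
    replace L with (map pair_swap (map pair_swap L))
      by (rewrite map_map, <- map_id; apply map_ext; intros [x y]; reflexivity).
    rewrite <- Hmap. apply HM. exists (map pair_swap L). split; auto.
    apply Injective_map_NoDup; auto using pair_swap_injective.
Qed.
Definition decide (P : Prop) : bool := if excluded_middle_informative P then true else false.

Lemma decide_true (P : Prop) : decide P = true <-> P.
Proof. unfold decide; destruct (excluded_middle_informative P); split; auto; discriminate. Qed.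

Lemma fin_sum_fiber {V : Type} (b : V -> V -> R) (h : V -> R) a (L : list (V * V)) :
  NoDup L -> (forall p, In p L -> fst p = a) ->
  NoDup (map snd L) /\
  fin_sum (fun p => b (fst p) (snd p) * h (fst p)) L = h a * fin_sum (b a) (map snd L).
Proof.
  induction 1 as [|p L Hp HL IH]; intros Hf; simpl; [split; [constructor | ring]|].
  destruct IH as [IH1 IH2]; [intros; apply Hf; simpl; auto|].
  assert (Hpa : fst p = a) by (apply Hf; simpl; auto).
  split.
  - constructor; auto. intros [q [Hq Hq']]%in_map_iff. apply Hp.
    assert (fst q = a) by (apply Hf; simpl; auto).
    replace p with q; auto. destruct p, q; simpl in *; subst; reflexivity.
  - rewrite IH2, Hpa. ring.
Qed.

Lemma fin_sum_pairs_le_degree {V : Type} (b : V -> V -> R) (deg h : V -> R) :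
  (forall x y, 0 <= b x y) -> (forall x, has_sum (b x) (deg x)) -> (forall x, 0 <= h x) ->
  forall l L, NoDup L -> (forall p, In p L -> h (fst p) <> 0 -> In (fst p) l) ->
  fin_sum (fun p => b (fst p) (snd p) * h (fst p)) L <= fin_sum (fun x => deg x * h x) l.
Proof.
  intros Hb Hd Hh l; induction l as [|a l IH]; intros L HL Hs.
  - apply (fin_sum_le_of_support _ L []); auto.
    + intros; apply Rmult_le_pos; auto.
    + intros p Hp Hne. apply (Hs p Hp). intro E. apply Hne. rewrite E; ring.
  - set (at_a := fun p : V * V => decide (fst p = a)).
    rewrite (fin_sum_filter _ at_a L). simpl.
    destruct (fin_sum_fiber b h a (filter at_a L)) as [Hnd ->].
    + apply NoDup_filter; auto.
    + intros p Hp. apply filter_In in Hp. apply decide_true. apply Hp.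
    + assert (fin_sum (b a) (map snd (filter at_a L)) <= deg a) by (apply has_sum_ub; auto).
      assert (h a * fin_sum (b a) (map snd (filter at_a L)) <= deg a * h a).
      { rewrite (Rmult_comm (deg a)). apply Rmult_le_compat_l; auto. }
      assert (fin_sum (fun p => b (fst p) (snd p) * h (fst p))
                (filter (fun p => negb (at_a p)) L) <= fin_sum (fun x => deg x * h x) l); [|lra].
      apply IH; [apply NoDup_filter; auto|].
      intros p [Hp Hp']%filter_In Hne.
      destruct (Hs p Hp Hne) as [E|E]; auto.
      unfold at_a in Hp'. rewrite (proj2 (decide_true _) (eq_sym E)) in Hp'. discriminate.
Qed.

Lemma indic_true (P : Prop) : P -> indic P = 1.
Proof.
  intros HP. unfold indic; destruct (excluded_middle_informative P); [reflexivity | contradiction].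
Qed.

Lemma indic_false (P : Prop) : ~ P -> indic P = 0.
Proof.
  intros HP. unfold indic; destruct (excluded_middle_informative P); [contradiction | reflexivity].
Qed.

Lemma indic_nonneg (P : Prop) : 0 <= indic P.
Proof. unfold indic; destruct (excluded_middle_informative P); lra. Qed.

Lemma fin_sum_indic {T : Type} (h : T -> R) (P : T -> Prop) l :
  fin_sum (fun x => h x * indic (P x)) l = fin_sum h (filter (fun x => decide (P x)) l).
Proof.
  induction l as [|a l IH]; simpl; [reflexivity|]. unfold decide at 1.
  destruct (excluded_middle_informative (P a)) as [HP|HP].
  - rewrite indic_true by auto. simpl. rewrite IH. ring.
  - rewrite indic_false by auto. rewrite IH. ring.
Qed.

Lemma exists_argmin_in_list {T : Type} (f : T -> R) (P : T -> Prop) l :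
  (exists x, In x l /\ P x) ->
  exists x0, In x0 l /\ P x0 /\ forall x, In x l -> P x -> f x0 <= f x.
Proof.
  induction l as [|a l IH]; intros [x [Hx HP]]; [destruct Hx|].
  destruct (classic (exists x, In x l /\ P x)) as [He|He].
  - destruct (IH He) as [x1 [H1 [H2 H3]]].
    destruct (classic (P a /\ f a <= f x1)) as [Ha|Ha].
    + exists a. split; [simpl; auto | split; [tauto|]].
      intros y [<-|Hy] Hy'; [lra|]. specialize (H3 y Hy Hy'); lra.
    + exists x1. split; [simpl; auto | split; auto].
      intros y [<-|Hy] Hy'; auto. apply Rnot_lt_le. intro. apply Ha. split; auto; lra.
  - exists a. destruct Hx as [<-|Hx]; [|exfalso; apply He; eauto].
    split; [simpl; auto | split; auto].
    intros y [<-|Hy] Hy'; [lra | exfalso; apply He; eauto].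
Qed.

Lemma filter_length_lt {T : Type} (p q : T -> bool) l x0 :
  (forall x, In x l -> q x = true -> p x = true) -> In x0 l -> p x0 = true -> q x0 = false ->
  (length (filter q l) < length (filter p l))%nat.
Proof.
  assert (Hle : forall l', (forall x, In x l' -> q x = true -> p x = true) ->
            (length (filter q l') <= length (filter p l'))%nat).
  { induction l' as [|a l' IH]; simpl; intros H; auto.
    destruct (q a) eqn:E; [rewrite (H a) by auto; simpl; apply le_n_S, IH; auto|].
    destruct (p a); simpl; auto. }
  induction l as [|a l IH]; intros Hqp Hx0 Hp Hq; [destruct Hx0|]. simpl.
  assert (Hqp' : forall x, In x l -> q x = true -> p x = true) by (intros; apply Hqp; simpl; auto).
  destruct Hx0 as [->|Hx0].
  - rewrite Hp, Hq. simpl. apply Nat.lt_succ_r, Hle; auto.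
  - specialize (IH Hqp' Hx0 Hp Hq).
    destruct (q a) eqn:E; [rewrite (Hqp a) by (simpl; auto); simpl; lia|].
    destruct (p a); simpl; lia.
Qed.

Section Coarea.
Context {V : Type} (b : V -> V -> R) (c : V -> R).
Hypothesis Hb0 : forall x y, 0 <= b x y.
Hypothesis Hbsym : forall x y, b x y = b y x.
Hypothesis Hc0 : forall x, 0 <= c x.

Definition grad_abs (f : V -> R) (p : V * V) : R :=
  b (fst p) (snd p) * Rabs (f (fst p) - f (snd p)).

Definition cut (W : list V) (p : V * V) : R :=
  indic (In (fst p) W /\ ~ In (snd p) W) * b (fst p) (snd p).

Definition isoperimetric_lb (mu : V -> R) (U : V -> Prop) (alpha : R) : Prop :=
  forall W, W <> [] -> NoDup W -> (forall x, In x W -> U x) ->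
    forall s, bdry b c W s -> alpha * fin_sum mu W <= s.

Definition shift_down (t : R) (f : V -> R) (x : V) : R := f x - t * indic (f x <> 0).

Definition nonzero_part (f : V -> R) (l : list V) : list V :=
  filter (fun x => decide (f x <> 0)) l.

Lemma grad_abs_nonneg f p : 0 <= grad_abs f p.
Proof. apply Rmult_le_pos; [apply Hb0 | apply Rabs_pos]. Qed.

Lemma cut_nonneg W p : 0 <= cut W p.
Proof. apply Rmult_le_pos; [apply indic_nonneg | apply Hb0]. Qed.

Section Peel.
Variables (f : V -> R) (t : R) (W : list V).
Hypothesis Ht : 0 < t.
Hypothesis HW : forall x, In x W <-> f x <> 0.
Hypothesis Hmin : forall x, f x <> 0 -> t <= f x.

Lemma shift_down_nonneg x : 0 <= shift_down t f x.
Proof.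
  unfold shift_down. destruct (classic (f x <> 0)) as [H|H].
  - rewrite indic_true by auto. specialize (Hmin x H). lra.
  - rewrite indic_false by auto. apply NNPP in H. rewrite H. lra.
Qed.

Lemma shift_down_supp x : shift_down t f x <> 0 -> f x <> 0.
Proof. intros Hg Hfx. apply Hg. unfold shift_down. rewrite Hfx, indic_false by tauto. ring. Qed.

(* Removing the lowest level [t] of [f] removes [t] times the edges crossing
   the boundary of its support, in both directions. *)
Lemma grad_abs_peel p :
  grad_abs f p = grad_abs (shift_down t f) p + t * cut W p + t * cut W (snd p, fst p).
Proof.
  destruct p as [x y]. unfold grad_abs, cut, shift_down; simpl. rewrite (Hbsym y x).
  destruct (classic (f x <> 0)) as [Hx|Hx]; destruct (classic (f y <> 0)) as [Hy|Hy].
  - rewrite (indic_true (f x <> 0)), (indic_true (f y <> 0)) by auto.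
    rewrite !indic_false by (rewrite !HW; tauto).
    replace (f x - t * 1 - (f y - t * 1)) with (f x - f y) by ring. ring.
  - apply NNPP in Hy. pose proof (Hmin x Hx).
    rewrite (indic_true (f x <> 0)), (indic_false (f y <> 0)) by tauto.
    rewrite (indic_true (In x W /\ _)), (indic_false (In y W /\ _)) by (rewrite !HW; tauto).
    rewrite Hy, !Rabs_right by lra. ring.
  - apply NNPP in Hx. pose proof (Hmin y Hy).
    rewrite (indic_true (f y <> 0)), (indic_false (f x <> 0)) by tauto.
    rewrite (indic_false (In x W /\ _)), (indic_true (In y W /\ _)) by (rewrite !HW; tauto).
    rewrite Hx, !Rabs_left1 by lra. ring.
  - apply NNPP in Hx. apply NNPP in Hy. rewrite !indic_false by (rewrite ?HW; tauto).
    rewrite Hx, Hy. replace (0 - t * 0 - (0 - t * 0)) with (0 - 0) by ring. ring.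
Qed.

Lemma has_sum_grad_abs_peel sA : has_sum (grad_abs f) sA ->
  exists sg sB, has_sum (grad_abs (shift_down t f)) sg /\ has_sum (cut W) sB /\
    sA = sg + t * sB + t * sB.
Proof.
  intros HA.
  assert (Hcut : forall p, cut W p <= / t * grad_abs f p).
  { intros p. rewrite grad_abs_peel.
    pose proof (grad_abs_nonneg (shift_down t f) p). pose proof (cut_nonneg W (snd p, fst p)).
    pose proof (cut_nonneg W p). apply (Rmult_le_reg_l t); auto. field_simplify; [nra | lra]. }
  assert (Hlow : forall p, grad_abs (shift_down t f) p <= grad_abs f p).
  { intros p. rewrite grad_abs_peel.
    pose proof (cut_nonneg W (snd p, fst p)). pose proof (cut_nonneg W p). nra. }
  destruct (has_sum_dominated _ _ _ Hcut
              (has_sum_scal _ (/ t) sA (Rinv_0_lt_compat t Ht) HA)) as [sB HsB].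
  destruct (has_sum_dominated _ _ _ Hlow HA) as [sg Hsg].
  exists sg, sB. split; [|split]; auto.
  apply (has_sum_unique (grad_abs f)); auto.
  apply has_sum_ext
    with (fun p => grad_abs (shift_down t f) p + t * cut W p + t * cut W (snd p, fst p)).
  { intros; symmetry; apply grad_abs_peel. }
  assert (Hpos : forall p, 0 <= t * cut W p) by (intros; pose proof (cut_nonneg W p); nra).
  apply has_sum_add.
  - intros p. pose proof (grad_abs_nonneg (shift_down t f) p). pose proof (Hpos p). lra.
  - intros p. apply (Hpos (snd p, fst p)).
  - apply has_sum_add; auto using grad_abs_nonneg. apply has_sum_scal; auto.
  - apply has_sum_scal; auto. apply (has_sum_swap (cut W)); auto.
Qed.

End Peel.

Lemma fin_sum_shift_down (w f : V -> R) t l :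
  fin_sum (fun x => w x * f x) l =
  fin_sum (fun x => w x * shift_down t f x) l + t * fin_sum w (nonzero_part f l).
Proof.
  unfold nonzero_part. rewrite <- fin_sum_indic, <- fin_sum_scal, <- fin_sum_add.
  apply fin_sum_ext. intros x _. unfold shift_down. ring.
Qed.

Theorem coarea_inequality mu U alpha : isoperimetric_lb mu U alpha ->
  forall f l, NoDup l -> (forall x, 0 <= f x) -> (forall x, f x <> 0 -> In x l /\ U x) ->
  forall sA, has_sum (grad_abs f) sA ->
  alpha * fin_sum (fun x => mu x * f x) l <= / 2 * sA + fin_sum (fun x => c x * f x) l.
Proof.
  intros Halpha f l Hl.
  remember (length (nonzero_part f l)) as k eqn:Hk. revert f Hk.
  induction k as [k IH] using lt_wf_ind; intros f Hk Hf0 Hs sA HA.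
  destruct (classic (exists x, In x l /\ f x <> 0)) as [Hex|Hnone].
  2: { rewrite (fin_sum_ext _ (fun _ => 0)), fin_sum_zero.
       2: { intros x Hx. destruct (Req_dec (f x) 0) as [E|E]; [rewrite E; ring | exfalso; eauto]. }
       pose proof (has_sum_nonneg _ _ HA).
       assert (0 <= fin_sum (fun x => c x * f x) l)
         by (apply fin_sum_nonneg; intros; apply Rmult_le_pos; auto).
       lra. }
  destruct (exists_argmin_in_list f (fun x => f x <> 0) l Hex) as [x0 [Hx0l [Hx0 Hmin]]].
  set (t := f x0). set (W := nonzero_part f l).
  assert (Ht : 0 < t) by (pose proof (Hf0 x0); unfold t; lra).
  assert (HW : forall x, In x W <-> f x <> 0).
  { intros x. unfold W, nonzero_part. rewrite filter_In, decide_true. split; [tauto|].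
    intros H; split; auto. apply Hs; auto. }
  assert (Hge : forall x, f x <> 0 -> t <= f x) by (intros x Hx; apply Hmin; auto; apply Hs; auto).
  destruct (has_sum_grad_abs_peel f t W Ht HW Hge sA HA) as [sg [sB [Hsg [HsB ->]]]].
  assert (Hcount : (length (nonzero_part (shift_down t f) l) < k)%nat).
  { subst k. unfold nonzero_part. apply filter_length_lt with x0; auto.
    - intros x _ Hq. rewrite decide_true in *. apply (shift_down_supp f t), Hq.
    - apply decide_true; auto.
    - destruct (decide _) eqn:E; auto. rewrite decide_true in E. exfalso; apply E.
      unfold shift_down. rewrite indic_true by auto. fold t. ring. }
  assert (IHg := IH _ Hcount (shift_down t f) eq_refl (shift_down_nonneg f t Hge)
     ltac:(intros x Hx; apply Hs, (shift_down_supp f t), Hx) sg Hsg).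
  assert (Hcut : alpha * fin_sum mu W <= sB + fin_sum c W).
  { apply Halpha;
      [| apply NoDup_filter; auto | intros x Hx%HW; apply Hs; auto | exists sB; split; auto].
    intros E. assert (In x0 W) as H by (apply HW; auto). rewrite E in H; destruct H. }
  rewrite (fin_sum_shift_down mu f t l), (fin_sum_shift_down c f t l). fold W.
  assert (t * (alpha * fin_sum mu W) <= t * (sB + fin_sum c W)) by (apply Rmult_le_compat_l; lra).
  nra.
Qed.

End Coarea.

Lemma sqr_le_mult_of_amgm (X Y a : R) : 0 <= X -> 0 <= Y -> 0 <= a ->
  (forall k, 0 < k -> 2 * a <= k * X + Y / k) -> a * a <= X * Y.
Proof.
  intros HX HY Ha H.
  destruct (Req_dec a 0) as [->|Ha0]; [nra|].
  destruct (Req_dec X 0) as [->|HX0].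
  - exfalso. assert (Hk : 0 < (Y + 1) / a) by (apply Rdiv_lt_0_compat; lra).
    specialize (H _ Hk).
    replace (Y / ((Y + 1) / a)) with (a - a / (Y + 1)) in H by (field; lra).
    assert (0 < a / (Y + 1)) by (apply Rdiv_lt_0_compat; lra).
    lra.
  - assert (Hk : 0 < a / X) by (apply Rdiv_lt_0_compat; lra).
    specialize (H (a / X) Hk). replace (a / X * X) with a in H by (field; lra).
    replace (Y / (a / X)) with (Y * X / a) in H by (field; lra).
    assert (a * a <= a * (Y * X / a)) by (apply Rmult_le_compat_l; lra).
    replace (a * (Y * X / a)) with (X * Y) in H0 by (field; lra). lra.
Qed.

Lemma Rabs_sqr_sub_le (u v k : R) : 0 < k ->
  Rabs (u ^ 2 - v ^ 2) <= / 2 * (k * (u - v) ^ 2 + / k * (u + v) ^ 2).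
Proof.
  intros Hk. assert (0 < / k) by (apply Rinv_0_lt_compat; auto).
  assert (0 <= / k * (k * (u - v) + (u + v)) ^ 2) by (apply Rmult_le_pos; [lra | apply pow2_ge_0]).
  assert (0 <= / k * (k * (u - v) - (u + v)) ^ 2) by (apply Rmult_le_pos; [lra | apply pow2_ge_0]).
  assert (/ k * (k * (u - v) + (u + v)) ^ 2
          = k * (u - v) ^ 2 + / k * (u + v) ^ 2 + 2 * (u ^ 2 - v ^ 2)) by (field; lra).
  assert (/ k * (k * (u - v) - (u + v)) ^ 2
          = k * (u - v) ^ 2 + / k * (u + v) ^ 2 - 2 * (u ^ 2 - v ^ 2)) by (field; lra).
  apply Rabs_le. split; lra.
Qed.

Lemma bounds_sqrt_of_sqr_le (Z w M : R) : 0 <= M -> Z * Z <= w * (M * M) ->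
  - (sqrt w * M) <= Z <= sqrt w * M.
Proof.
  intros HM H. destruct (Rle_dec w 0) as [Hw|Hw].
  - rewrite sqrt_neg_0 by auto. assert (Z = 0) by nra. subst. lra.
  - assert (Rabs Z <= sqrt w * M).
    { rewrite <- (sqrt_square M), <- sqrt_mult, <- sqrt_Rsqr_abs by nra.
      apply sqrt_le_1_alt. unfold Rsqr. auto. }
    pose proof (Rle_abs Z). pose proof (Rle_abs (- Z)). rewrite Rabs_Ropp in *. lra.
Qed.

Definition supported_in {V : Type} (U : V -> Prop) (phi : V -> R) (l : list V) : Prop :=
  NoDup l /\ (forall x, phi x <> 0 -> In x l) /\ (forall x, In x l -> U x).

Definition wnorm2 {V : Type} (w phi : V -> R) (l : list V) : R :=
  fin_sum (fun x => w x * phi x ^ 2) l.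

Lemma wnorm2_nonneg {V : Type} (w phi : V -> R) l : (forall x, 0 <= w x) -> 0 <= wnorm2 w phi l.
Proof. intros Hw. apply fin_sum_nonneg. intros; apply Rmult_le_pos; auto; apply pow2_ge_0. Qed.

Lemma wnorm2_scal {V : Type} (w phi : V -> R) k l :
  wnorm2 (fun x => k * w x) phi l = k * wnorm2 w phi l.
Proof. unfold wnorm2. rewrite <- fin_sum_scal. apply fin_sum_ext. intros; ring. Qed.

Lemma wnorm2_le_on {V : Type} (U : V -> Prop) (w1 w2 phi : V -> R) l :
  (forall x, In x l -> U x) -> (forall x, U x -> w1 x <= w2 x) ->
  wnorm2 w1 phi l <= wnorm2 w2 phi l.
Proof.
  intros HU Hw. apply fin_sum_le. intros x Hx.
  pose proof (Hw x (HU x Hx)). pose proof (pow2_ge_0 (phi x)). nra.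
Qed.

Definition grad_sqr {V : Type} (b : V -> V -> R) (phi : V -> R) (p : V * V) : R :=
  b (fst p) (snd p) * (phi (fst p) - phi (snd p)) ^ 2.

Definition sum_sqr {V : Type} (b : V -> V -> R) (phi : V -> R) (p : V * V) : R :=
  b (fst p) (snd p) * (phi (fst p) + phi (snd p)) ^ 2.

Section Energy.
Context {V : Type} (b : V -> V -> R) (c n : V -> R) (U : V -> Prop).
Hypothesis Hb0 : forall x y, 0 <= b x y.
Hypothesis Hbsym : forall x y, b x y = b y x.
Hypothesis Hc0 : forall x, 0 <= c x.
Hypothesis Hn : forall x, has_sum (fun y => b x y) (n x - c x).

Variables (phi : V -> R) (l : list V).
Hypothesis Hl : NoDup l.
Hypothesis Hsupp : forall x, phi x <> 0 -> In x l.

Lemma has_sum_weighted_sqr (w : V -> R) : (forall x, 0 <= w x) ->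
  has_sum (fun x => w x * phi x ^ 2) (wnorm2 w phi l).
Proof.
  intros Hw. apply has_sum_fin_supp; auto.
  - intros x; apply Rmult_le_pos; [auto | apply pow2_ge_0].
  - intros x Hx. apply Hsupp. intros E. apply Hx. rewrite E. ring.
Qed.

(* [(phi x - phi y)^2 + (phi x + phi y)^2 = 2 phi x^2 + 2 phi y^2], summed
   against [b] and bounded through the degrees [n - c]. *)
Lemma has_sum_sqr_sum_bound s1 :
  has_sum (grad_sqr b phi) s1 ->
  exists sS, has_sum (sum_sqr b phi) sS /\
    s1 + sS <= 4 * wnorm2 (fun x => n x - c x) phi l.
Proof.
  intros Hs1.
  set (G := fun p : V * V => b (fst p) (snd p) * phi (fst p) ^ 2).
  set (G' := fun p : V * V => b (fst p) (snd p) * phi (snd p) ^ 2).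
  assert (HG0 : forall p, 0 <= G p) by (intros; apply Rmult_le_pos; auto; apply pow2_ge_0).
  assert (HG'0 : forall p, 0 <= G' p) by (intros; apply Rmult_le_pos; auto; apply pow2_ge_0).
  assert (HGb : forall L, NoDup L -> fin_sum G L <= wnorm2 (fun x => n x - c x) phi l).
  { intros L HL. apply (fin_sum_pairs_le_degree b (fun x => n x - c x) (fun x => phi x ^ 2));
      auto using pow2_ge_0.
    intros p _ Hp. apply Hsupp. intro E; apply Hp; rewrite E; ring. }
  destruct (has_sum_of_bound G _ HGb) as [sG HsG].
  assert (HsG' : has_sum G' sG).
  { apply has_sum_ext with (fun p => G (snd p, fst p)); [|apply (has_sum_swap G); auto].
    intros [x y]; unfold G, G'; simpl. rewrite Hbsym; auto. }
  assert (H22 := has_sum_lincomb G G' sG sG 2 2 ltac:(lra) ltac:(lra) HG0 HG'0 HsG HsG').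
  assert (HS : forall p, sum_sqr b phi p <= 2 * G p + 2 * G' p).
  { intros [x y]; unfold sum_sqr, G, G'; simpl. pose proof (Hb0 x y).
    assert ((phi x + phi y) ^ 2 <= 2 * phi x ^ 2 + 2 * phi y ^ 2)
      by (pose proof (pow2_ge_0 (phi x - phi y)); nra).
    nra. }
  destruct (has_sum_dominated _ _ _ HS H22) as [sS HsS].
  exists sS. split; auto.
  assert (s1 + sS = 2 * sG + 2 * sG); [|pose proof (has_sum_le_bound G sG _ HsG HGb); lra].
  apply (has_sum_unique (fun p => grad_sqr b phi p + sum_sqr b phi p)).
  - apply has_sum_add; auto; intros; apply Rmult_le_pos; auto; apply pow2_ge_0.
  - eapply has_sum_ext; [|exact H22]. intros p; unfold grad_sqr, sum_sqr, G, G'. ring.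
Qed.

Lemma has_sum_grad_abs_sqr s1 sS :
  has_sum (grad_sqr b phi) s1 ->
  has_sum (sum_sqr b phi) sS ->
  exists sA, has_sum (grad_abs b (fun x => phi x ^ 2)) sA /\
    forall k, 0 < k -> sA <= / 2 * (k * s1 + / k * sS).
Proof.
  intros Hs1 HsS.
  assert (Hsum : forall k, 0 < k ->
            has_sum (fun p => / 2 * (k * grad_sqr b phi p + / k * sum_sqr b phi p))
                    (/ 2 * (k * s1 + / k * sS))).
  { intros k Hk. apply has_sum_scal; [lra|].
    apply has_sum_lincomb; auto using Rinv_0_lt_compat;
      intros; apply Rmult_le_pos; auto; apply pow2_ge_0. }
  assert (Hle : forall k, 0 < k -> forall p,
            grad_abs b (fun x => phi x ^ 2) p <= / 2 * (k * grad_sqr b phi p + / k * sum_sqr b phi p)).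
  { intros k Hk p. unfold grad_abs, grad_sqr, sum_sqr. pose proof (Hb0 (fst p) (snd p)).
    pose proof (Rabs_sqr_sub_le (phi (fst p)) (phi (snd p)) k Hk). nra. }
  destruct (has_sum_dominated _ _ _ (Hle 1 Rlt_0_1) (Hsum 1 Rlt_0_1)) as [sA HsA].
  exists sA. split; auto.
  intros k Hpos. exact (has_sum_le _ _ _ _ (Hle k Hpos) HsA (Hsum k Hpos)).
Qed.

Lemma energy_isoperimetric_bound (mu : V -> R) (alpha Q : R) :
  isoperimetric_lb b c mu U alpha -> 0 <= alpha -> (forall x, 0 <= mu x) ->
  (forall x, In x l -> U x) -> Qmax b c phi Q ->
  0 <= Q /\ (alpha * wnorm2 mu phi l) ^ 2 <= Q * (2 * wnorm2 n phi l - Q).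
Proof.
  intros Halpha Hal0 Hmu0 HU [s1 [s2 [Hs1 [Hs2 ->]]]].
  assert (Es2 : s2 = wnorm2 c phi l)
    by (eapply has_sum_unique; eauto; apply has_sum_weighted_sqr; auto).
  destruct (has_sum_sqr_sum_bound s1 Hs1) as [sS [HsS Hsum]].
  destruct (has_sum_grad_abs_sqr s1 sS Hs1 HsS) as [sA [HsA HAk]].
  assert (Hcoarea : alpha * wnorm2 mu phi l <= / 2 * sA + wnorm2 c phi l).
  { apply (coarea_inequality b c Hb0 Hbsym Hc0 mu U alpha Halpha (fun x => phi x ^ 2) l Hl);
      auto using pow2_ge_0.
    intros x Hx. assert (phi x <> 0) by (intro E; apply Hx; rewrite E; ring). auto. }
  assert (Hn_split : wnorm2 (fun x => n x - c x) phi l + wnorm2 c phi l = wnorm2 n phi l).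
  { unfold wnorm2. rewrite <- fin_sum_add. apply fin_sum_ext. intros; ring. }
  pose proof (has_sum_nonneg _ _ Hs1). pose proof (has_sum_nonneg _ _ HsS).
  pose proof (has_sum_nonneg _ _ Hs2).
  assert (HN0 : 0 <= alpha * wnorm2 mu phi l) by (apply Rmult_le_pos; auto using wnorm2_nonneg).
  split; [lra|].
  set (P := / 2 * sS + s2).
  apply Rle_trans with ((/ 2 * s1 + s2) * P); [|apply Rmult_le_compat_l; unfold P; lra].
  rewrite <- Rsqr_pow2. apply sqr_le_mult_of_amgm; unfold P; try lra.
  intros k Hk. specialize (HAk k Hk).
  assert (0 < / k) by (apply Rinv_0_lt_compat; auto).
  (* [2 s2 <= (k + 1/k) s2] since [(k - 1)^2 / k >= 0] *)
  assert (0 <= (k - 1) ^ 2 * / k * s2)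
    by (apply Rmult_le_pos; auto; apply Rmult_le_pos; [apply pow2_ge_0 | lra]).
  assert ((k - 1) ^ 2 * / k * s2 = k * s2 + / k * s2 - 2 * s2) by (field; lra).
  unfold Rdiv. nra.
Qed.

End Energy.

Section FiniteBounds.
Context {V : Type} (b : V -> V -> R) (c n m : V -> R) (U : V -> Prop).
Hypothesis Hb0 : forall x y, 0 <= b x y.
Hypothesis Hbsym : forall x y, b x y = b y x.
Hypothesis Hc0 : forall x, 0 <= c x.
Hypothesis Hn : forall x, has_sum (fun y => b x y) (n x - c x).
Hypothesis Hn0 : forall x, 0 <= n x.
Hypothesis Hm0 : forall x, 0 <= m x.

Variables (phi : V -> R) (l : list V) (Q : R).
Hypothesis Hsupp : supported_in U phi l.
Hypothesis HQ : Qmax b c phi Q.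

Lemma energy_near_n_norm an : isoperimetric_lb b c n U an -> 0 <= an ->
  - (sqrt (1 - an ^ 2) * wnorm2 n phi l) <= Q - wnorm2 n phi l <= sqrt (1 - an ^ 2) * wnorm2 n phi l.
Proof.
  intros Han Han0. destruct Hsupp as [Hl [Hs HU]].
  destruct (energy_isoperimetric_bound b c n U Hb0 Hbsym Hc0 Hn phi l Hl Hs n an Q Han Han0 Hn0 HU HQ)
    as [_ Hbound].
  apply bounds_sqrt_of_sqr_le; [apply wnorm2_nonneg; auto | nra].
Qed.

Lemma energy_near_m_norm am DU : isoperimetric_lb b c m U am -> 0 <= am ->
  (forall x, U x -> n x <= DU * m x) ->
  - (sqrt (DU ^ 2 - am ^ 2) * wnorm2 m phi l) <= Q - DU * wnorm2 m phi l
    <= sqrt (DU ^ 2 - am ^ 2) * wnorm2 m phi l.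
Proof.
  intros Ham Ham0 HDU. destruct Hsupp as [Hl [Hs HU]].
  destruct (energy_isoperimetric_bound b c n U Hb0 Hbsym Hc0 Hn phi l Hl Hs m am Q Ham Ham0 Hm0 HU HQ)
    as [HQ0 Hbound].
  assert (wnorm2 n phi l <= DU * wnorm2 m phi l).
  { rewrite <- wnorm2_scal. apply (wnorm2_le_on U); auto. }
  apply bounds_sqrt_of_sqr_le; [apply wnorm2_nonneg; auto | nra].
Qed.

Lemma finite_energy_bounds an am dU :
  isoperimetric_lb b c n U an -> 0 <= an -> isoperimetric_lb b c m U am -> 0 <= am ->
  0 <= dU -> (forall x, U x -> dU * m x <= n x) ->
  dU * (1 - sqrt (1 - an ^ 2)) * wnorm2 m phi l <= Q /\
  (forall DU, (forall x, U x -> n x <= DU * m x) ->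
     Q <= DU * (1 + sqrt (1 - an ^ 2)) * wnorm2 m phi l /\
     (DU - sqrt (DU ^ 2 - am ^ 2)) * wnorm2 m phi l <= Q /\
     Q <= (DU + sqrt (DU ^ 2 - am ^ 2)) * wnorm2 m phi l).
Proof.
  intros Han Han0 Ham Ham0 HdU0 HdU.
  assert (HU := proj2 (proj2 Hsupp)).
  pose proof (wnorm2_nonneg m phi l Hm0).
  assert (Hs : 0 <= sqrt (1 - an ^ 2) <= 1).
  { split; [apply sqrt_pos|]. rewrite <- sqrt_1 at 2. apply sqrt_le_1_alt.
    pose proof (pow2_ge_0 an); lra. }
  assert (Hlow : dU * wnorm2 m phi l <= wnorm2 n phi l)
    by (rewrite <- wnorm2_scal; apply (wnorm2_le_on U); auto).
  pose proof (energy_near_n_norm an Han Han0).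
  split.
  { assert (0 <= (1 - sqrt (1 - an ^ 2)) * (wnorm2 n phi l - dU * wnorm2 m phi l))
      by (apply Rmult_le_pos; lra).
    nra. }
  intros DU HDU.
  assert (Hup : wnorm2 n phi l <= DU * wnorm2 m phi l).
  { rewrite <- wnorm2_scal. apply (wnorm2_le_on U); auto. }
  pose proof (energy_near_m_norm am DU Ham Ham0 HDU).
  split; [nra | split; lra].
Qed.

End FiniteBounds.

Lemma sqr_le_split (a b t : R) : 0 < t -> a ^ 2 <= (1 + t) * b ^ 2 + (1 + / t) * (a - b) ^ 2.
Proof.
  intros Ht.
  assert (0 <= / t * (t * b - (a - b)) ^ 2)
    by (apply Rmult_le_pos; [left; apply Rinv_0_lt_compat; auto | apply pow2_ge_0]).
  assert (/ t * (t * b - (a - b)) ^ 2 = t * b ^ 2 - 2 * b * (a - b) + / t * (a - b) ^ 2)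
    by (field; lra).
  nra.
Qed.

Lemma norm2_le_split {V : Type} (m f g h : V -> R) Nf Ng Nh t :
  (forall x, 0 <= m x) -> 0 < t -> (forall x, h x ^ 2 = (f x - g x) ^ 2) ->
  norm2 m f Nf -> norm2 m g Ng -> norm2 m h Nh -> Nf <= (1 + t) * Ng + (1 + / t) * Nh.
Proof.
  intros Hm Ht Hh Hf Hg HNh.
  assert (Hw : forall (u : V -> R) x, 0 <= m x * u x ^ 2)
    by (intros; apply Rmult_le_pos; auto; apply pow2_ge_0).
  eapply (has_sum_le _ (fun x => (1 + t) * (m x * g x ^ 2) + (1 + / t) * (m x * h x ^ 2)));
    [| exact Hf |].
  - intros x. rewrite Hh. pose proof (sqr_le_split (f x) (g x) t Ht).
    pose proof (Hm x). nra.
  - assert (0 < / t) by (apply Rinv_0_lt_compat; auto).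
    apply has_sum_lincomb; auto; lra.
Qed.

Lemma cv_of_split_bounds (a r : nat -> R) (L : R) :
  0 <= L -> (forall k, 0 <= r k) -> Un_cv r 0 ->
  (forall t k, 0 < t -> a k <= (1 + t) * L + (1 + / t) * r k) ->
  (forall t k, 0 < t -> L <= (1 + t) * a k + (1 + / t) * r k) ->
  Un_cv a L.
Proof.
  intros HL Hr0 Hr Hup Hlow e He.
  set (t := Rmin (e / (4 * (L + 1))) 1).
  assert (Ht : 0 < t) by (apply Rmin_glb_lt; [apply Rdiv_lt_0_compat|]; lra).
  assert (Ht1 : t <= 1) by apply Rmin_r.
  assert (HtL : 2 * t * L < e / 2).
  { assert (t * (4 * (L + 1)) <= e).
    { pose proof (Rmin_l (e / (4 * (L + 1))) 1) as Hmin. fold t in Hmin.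
      apply (Rmult_le_compat_r (4 * (L + 1))) in Hmin; [|lra]. field_simplify in Hmin; lra. }
    nra. }
  set (C := 1 + / t).
  assert (HC : 1 <= C) by (unfold C; pose proof (Rinv_0_lt_compat t Ht); lra).
  destruct (Hr (e / (4 * C))) as [K HK]; [apply Rdiv_lt_0_compat; lra|].
  exists K. intros k Hk. specialize (HK k Hk). unfold Rdist in *.
  rewrite Rminus_0_r, Rabs_right in HK by (apply Rle_ge; auto).
  assert (HCr : 2 * C * r k < e / 2).
  { apply (Rmult_lt_compat_l (2 * C)) in HK; [|lra].
    replace (2 * C * (e / (4 * C))) with (e / 2) in HK by (field; lra). lra. }
  specialize (Hup t k Ht). specialize (Hlow t k Ht). fold C in Hup, Hlow.
  pose proof (Hr0 k).
  apply Rabs_def1.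
  - assert (t * L <= 2 * t * L) by nra. assert (C * r k <= 2 * C * r k) by nra. lra.
  - assert (t * a k <= t * ((1 + t) * L + C * r k)) by (apply Rmult_le_compat_l; lra).
    assert (t * t * L <= t * L) by (apply Rmult_le_compat_r; nra).
    nra.
Qed.

Lemma norm2_cv_of_approx {V : Type} (m : V -> R) (phi : nat -> V -> R) (u : V -> R) Nk r N :
  (forall x, 0 <= m x) ->
  (forall k, norm2 m (phi k) (Nk k)) -> (forall k, norm2 m (fun x => phi k x - u x) (r k)) ->
  Un_cv r 0 -> norm2 m u N -> Un_cv Nk N.
Proof.
  intros Hm HN Hr Hr0 HNu.
  apply (cv_of_split_bounds Nk r N (has_sum_nonneg _ _ HNu)); auto.
  - intros k; exact (has_sum_nonneg _ _ (Hr k)).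
  - intros t k Ht. apply (norm2_le_split m (phi k) u (fun x => phi k x - u x)); auto.
  - intros t k Ht. apply (norm2_le_split m u (phi k) (fun x => phi k x - u x)); auto.
    intros; ring.
Qed.

Lemma fin_supp_in_supported {V : Type} (U : V -> Prop) (f : V -> R) :
  fin_supp_in U f -> exists l, supported_in U f l.
Proof.
  intros [l0 Hl0].
  exists (nonzero_part f (nodup (fun x y => excluded_middle_informative (x = y)) l0)).
  unfold nonzero_part. split; [apply NoDup_filter, NoDup_nodup | split].
  - intros x Hx. apply filter_In. rewrite nodup_In, decide_true. split; auto. apply Hl0; auto.
  - intros x [_ Hx]%filter_In. rewrite decide_true in Hx. apply Hl0; auto.
Qed.

Lemma QU_graph_approximants {V : Type} (b : V -> V -> R) (c m : V -> R) (U : V -> Prop) u q N :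
  (forall x, 0 <= m x) -> QU_graph b c m U u q -> norm2 m u N ->
  exists (phi : nat -> V -> R) (l : nat -> list V) (qk : nat -> R),
    (forall k, supported_in U (phi k) (l k) /\ Qmax b c (phi k) (qk k)) /\
    Un_cv (fun k => wnorm2 m (phi k) (l k)) N /\ Un_cv qk q.
Proof.
  intros Hm [phi [Hsupp [[r [Hr Hr0]] [_ [qk [Hqk Hqcv]]]]]] HN.
  set (l := fun k => proj1_sig (constructive_indefinite_description _
                                  (fin_supp_in_supported U (phi k) (Hsupp k)))).
  assert (Hl : forall k, supported_in U (phi k) (l k))
    by (intros k; exact (proj2_sig (constructive_indefinite_description _ _))).
  exists phi, l, qk. split; [|split]; auto.
  apply (norm2_cv_of_approx m phi u _ r N Hm); auto.
  intros k. destruct (Hl k) as [Hnd [Hs _]].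
  apply has_sum_weighted_sqr; auto.
Qed.

Lemma is_alpha_nonneg {V : Type} (b : V -> V -> R) (c mu : V -> R) (U : V -> Prop) a :
  (forall x, 0 < mu x) -> (forall x, 0 <= c x) -> is_alpha b c mu U a -> 0 <= a.
Proof.
  intros Hmu Hc [_ Hglb]. apply Hglb.
  intros r [W [HW [_ [_ [s [[s1 [Hs1 ->]] ->]]]]]].
  pose proof (has_sum_nonneg _ _ Hs1). pose proof (fin_sum_pos mu W HW Hmu).
  assert (0 <= fin_sum c W) by (apply fin_sum_nonneg; auto).
  apply Rmult_le_pos; [lra | left; apply Rinv_0_lt_compat; auto].
Qed.

Lemma is_alpha_isoperimetric {V : Type} (b : V -> V -> R) (c mu : V -> R) (U : V -> Prop) a :
  (forall x, 0 < mu x) -> is_alpha b c mu U a -> isoperimetric_lb b c mu U a.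
Proof.
  intros Hmu [Hlow _] W HW HWn HWU s Hb.
  assert (Ha : a <= s / fin_sum mu W) by (apply Hlow; exists W; repeat split; eauto).
  pose proof (fin_sum_pos mu W HW Hmu).
  apply (Rmult_le_compat_r (fin_sum mu W)) in Ha; [|lra]. field_simplify in Ha; lra.
Qed.

Section Ratio.
Context {V : Type} (U : V -> Prop) (n m : V -> R).
Hypothesis Hm : forall x, 0 < m x.

Lemma inf_ratio_nonneg d : (forall x, 0 < n x) ->
  is_inf (fun r => exists x, U x /\ r = n x / m x) d -> 0 <= d.
Proof. intros Hn [_ Hglb]. apply Hglb. intros r [x [_ ->]]. left. apply Rdiv_lt_0_compat; auto. Qed.

Lemma inf_ratio_le d : is_inf (fun r => exists x, U x /\ r = n x / m x) d ->
  forall x, U x -> d * m x <= n x.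
Proof.
  intros [Hlow _] x Hx. assert (Hd : d <= n x / m x) by (apply Hlow; eauto).
  pose proof (Hm x). apply (Rmult_le_compat_r (m x)) in Hd; [|lra]. field_simplify in Hd; lra.
Qed.

Lemma sup_ratio_ge D : is_sup (fun r => exists x, U x /\ r = n x / m x) D ->
  forall x, U x -> n x <= D * m x.
Proof.
  intros [Hup _] x Hx. assert (HD : n x / m x <= D) by (apply Hup; eauto).
  pose proof (Hm x). apply (Rmult_le_compat_r (m x)) in HD; [|lra]. field_simplify in HD; lra.
Qed.

End Ratio.

Lemma Un_cv_scal (a : R) (u : nat -> R) l : Un_cv u l -> Un_cv (fun k => a * u k) (a * l).
Proof.
  intros Hu. apply CV_mult; auto.
  intros e He. exists 0%nat. intros. unfold Rdist. rewrite Rminus_diag, Rabs_R0. lra.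
Qed.

Lemma scal_lim_le (a : R) (Nk qk : nat -> R) N q :
  Un_cv Nk N -> Un_cv qk q -> (forall k, a * Nk k <= qk k) -> a * N <= q.
Proof. intros HN Hq Hk. exact (Rle_cv_lim Hk (Un_cv_scal a Nk N HN) Hq). Qed.

Lemma lim_le_scal (a : R) (Nk qk : nat -> R) N q :
  Un_cv Nk N -> Un_cv qk q -> (forall k, qk k <= a * Nk k) -> q <= a * N.
Proof. intros HN Hq Hk. exact (Rle_cv_lim Hk Hq (Un_cv_scal a Nk N HN)). Qed.

Theorem mainTheorem8
  (V : Type)
  (HV : exists e : nat -> V, (forall i j, e i = e j -> i = j) /\ (forall x, exists i, e i = x))
  (b : V -> V -> R) (c : V -> R)
  (Hb0 : forall x y, 0 <= b x y) (Hbxx : forall x, b x x = 0)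
  (Hbsym : forall x y, b x y = b y x) (Hc0 : forall x, 0 <= c x)
  (Hbsum : forall x, exists s, has_sum (fun y => b x y) s)
  (n : V -> R) (Hn : forall x, has_sum (fun y => b x y) (n x - c x))
  (Hnpos : forall x, 0 < n x)
  (m : V -> R) (Hm : forall x, 0 < m x)
  (U : V -> Prop) (HU : exists x, U x)
  (dU : R) (HdU : is_inf (fun r => exists x, U x /\ r = n x / m x) dU)
  (an : R) (Han : is_alpha b c n U an)
  (am : R) (Ham : is_alpha b c m U am) :
  forall (u : V -> R) (q N : R), QU_graph b c m U u q -> norm2 m u N ->
    dU * (1 - sqrt (1 - an ^ 2)) * N <= q /\
    (forall DU, is_sup (fun r => exists x, U x /\ r = n x / m x) DU ->
       q <= DU * (1 + sqrt (1 - an ^ 2)) * N /\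
       (DU - sqrt (DU ^ 2 - am ^ 2)) * N <= q /\
       q <= (DU + sqrt (DU ^ 2 - am ^ 2)) * N).
Proof.
  intros u q N HQU HN.
  assert (Hn0 : forall x, 0 <= n x) by (intros; left; auto).
  assert (Hm0 : forall x, 0 <= m x) by (intros; left; auto).
  destruct (QU_graph_approximants b c m U u q N Hm0 HQU HN) as [phi [l [qk [Hk [HNcv Hqcv]]]]].
  assert (Hfin := fun k =>
    finite_energy_bounds b c n m U Hb0 Hbsym Hc0 Hn Hn0 Hm0 (phi k) (l k) (qk k)
      (proj1 (Hk k)) (proj2 (Hk k)) an am dU
      (is_alpha_isoperimetric b c n U an Hnpos Han) (is_alpha_nonneg b c n U an Hnpos Hc0 Han)
      (is_alpha_isoperimetric b c m U am Hm Ham) (is_alpha_nonneg b c m U am Hm Hc0 Ham)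
      (inf_ratio_nonneg U n m Hm dU Hnpos HdU) (inf_ratio_le U n m Hm dU HdU)).
  split; [apply (scal_lim_le _ _ _ _ _ HNcv Hqcv); intros k; apply Hfin|].
  intros DU HDU.
  assert (Hfin' := fun k => proj2 (Hfin k) DU (sup_ratio_ge U n m Hm DU HDU)).
  split; [|split].
  - apply (lim_le_scal _ _ _ _ _ HNcv Hqcv). intros k; apply Hfin'.
  - apply (scal_lim_le _ _ _ _ _ HNcv Hqcv). intros k; apply Hfin'.
  - apply (lim_le_scal _ _ _ _ _ HNcv Hqcv). intros k; apply Hfin'.
Qed.
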